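(* Let $z^0\in X$, $\gamma\in(0,2)$, $\delta\in[0,1/2)$, and let $\{\sigma_k\},\{\eta_k\}$ be nonnegative with $\sum_k\eta_k<\infty$, $\inf_k\sigma_k>0$; let $z^{k+1}$ be an output of IGPPAstep$(z^k,\sigma_k,\eta_k,\delta,\gamma,M)$ for all $k\ge0$. Assume $T$ satisfies the bounded metric subregularity condition, let $\bar z^0$ be a point of $\Omega$ nearest to $z^0$ in $\|\cdot\|_M$, let $r\ge\|\bar z^0\|+\frac{1}{\lambda_{\min}(M)}(\operatorname{dist}_M(z^0,\Omega)+\gamma\sum_k\eta_k)$ and $\kappa_r>0$ with $\operatorname{dist}(z,\Omega)\le\kappa_r\operatorname{dist}(0,T(z))$ for $\|z\|\le r$. Then for every $k\ge0$, $$\frac{1-\delta}{\gamma}\|z^{k+1}-z^k\|_M\le\operatorname{dist}_M(z^k,\Omega)\le\frac{1+\delta}{\gamma\Big(1-\sqrt{\frac{\kappa_r^2}{\sigma_k^2+\kappa_r^2}}\Big)}\|z^{k+1}-z^k\|_M.$$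
   Context: $X$ is a finite-dimensional real Hilbert space; $T:X\rightrightarrows X$ is maximal monotone with $\Omega:=T^{-1}(0)\neq\emptyset$. $M$ is self-adjoint positive definite with $\lambda_{\max}(M)=1$; $\|z\|_M=\sqrt{\langle z,Mz\rangle}$, $\operatorname{dist}_M(z,D)=\min_{d\in D}\|d-z\|_M$, $\operatorname{dist}=\operatorname{dist}_I$. $\mathcal{J}_{\sigma M^{-1}T}:=(I+\sigma M^{-1}T)^{-1}$. $z^+$ is an output of IGPPAstep$(z,\sigma,\eta,\delta,\gamma,M)$ if $z^+=\gamma w+(1-\gamma)z$ for some $w$ with $\|w-\mathcal{J}_{\sigma M^{-1}T}(z)\|_M\le\min\{\eta,\delta\|w-z\|_M\}$. Bounded metric subregularity: for every $r>0$ there is $\kappa_r>0$ with $\operatorname{dist}(z,\Omega)\le\kappa_r\operatorname{dist}(0,T(z))$ for all $\|z\|\le r$. *)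

From HB Require Import structures.
From mathcomp Require Import all_boot all_order all_algebra.
From mathcomp Require Import all_classical all_reals.
From mathcomp Require Import topology normedtype sequences.
Set Implicit Arguments. Unset Strict Implicit. Unset Printing Implicit Defensive.
Import Order.TTheory GRing.Theory Num.Theory.
Local Open Scope ring_scope.
Local Open Scope classical_set_scope.

Section Defs.
Variables (R : realType) (n : nat).
Local Notation X := 'cV[R]_n.

Definition dotp (x y : X) : R := (x^T *m y) 0 0.
Definition enorm (x : X) : R := Num.sqrt (dotp x x).
Definition normM (M : 'M[R]_n) (z : X) : R := Num.sqrt (dotp z (M *m z)).
Definition distM (M : 'M[R]_n) (z : X) (D : set X) : R :=
  inf [set normM M (d - z) | d in D].
Definition dist (z : X) (D : set X) : R :=
  inf [set enorm (d - z) | d in D].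

(* set-valued operators T : X => X, u \in T x written T x u *)
Definition monotone (T : X -> set X) : Prop :=
  forall x y u v, T x u -> T y v -> 0 <= dotp (x - y) (u - v).
Definition maximal_monotone (T : X -> set X) : Prop :=
  monotone T /\
  forall T' : X -> set X, monotone T' -> (forall x u, T x u -> T' x u) ->
    forall x u, T' x u -> T x u.

Definition zeros (T : X -> set X) : set X := [set z | T z 0].

Definition symmetric_posdef (M : 'M[R]_n) : Prop :=
  M^T = M /\ forall z : X, z != 0 -> 0 < dotp z (M *m z).

(* J_{sigma M^{-1} T}(z) = (I + sigma M^{-1} T)^{-1}(z), as a set:
   the w with z \in w + sigma M^{-1} T(w) *)
Definition resolvent (T : X -> set X) (M : 'M[R]_n) (sigma : R) (z : X)
  : set X :=
  [set w | exists u, T w u /\ z = w + sigma *: (invmx M *m u)].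

Definition IGPPAstep (T : X -> set X) (M : 'M[R]_n)
  (z : X) (sigma eta delta gamma : R) (zplus : X) : Prop :=
  exists w J, resolvent T M sigma z J /\
    normM M (w - J) <= Num.min eta (delta * normM M (w - z)) /\
    zplus = gamma *: w + (1 - gamma) *: z.

(* bounded metric subregularity (dist(0, T z) = +oo when T z is empty) *)
Definition bounded_metric_subregular (T : X -> set X) : Prop :=
  forall r : R, 0 < r -> exists kappa : R, 0 < kappa /\
    forall z : X, enorm z <= r -> forall v, T z v ->
      dist z (zeros T) <= kappa * enorm v.

End Defs.

(* Let J be the exact resolvent point behind the inexact step from z^k to z^{k+1}. Monotonicity
   of T makes the resolvent firmly nonexpansive towards Omega in the M-geometry, which gives
   the Pythagoras inequality ||z^k - J||_M^2 + dist_M(J, Omega)^2 <= dist_M(z^k, Omega)^2 and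
   Fejer monotonicity of the iterates up to the errors eta_k; hence J lies in the ball of
   radius r.  There the error bound gives dist_M(J, Omega) <= (kappa/sigma_k) ||z^k - J||_M, and
   with Pythagoras dist_M(J, Omega) <= rho dist_M(z^k, Omega) for
   rho = sqrt(kappa^2 / (sigma_k^2 + kappa^2)).  The triangle inequality then yields
   (1 - rho) dist_M(z^k, Omega) <= ||z^k - J||_M <= dist_M(z^k, Omega), and the inexactness
   criterion makes gamma ||z^k - J||_M comparable to ||z^{k+1} - z^k||_M up to factors 1 -+ delta. *)

From HB Require Import structures.
From mathcomp Require Import all_boot all_order all_algebra.
From mathcomp Require Import all_classical all_reals.
From mathcomp Require Import topology normedtype sequences derive.
From mathcomp Require Import ring lra.
Import Order.TTheory GRing.Theory Num.Theory numFieldTopology.Exports numFieldNormedType.Exports.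
Local Open Scope ring_scope.
Local Open Scope classical_set_scope.
Set Implicit Arguments. Unset Strict Implicit. Unset Printing Implicit Defensive.

Lemma quadratic_ge0_discriminant (R : realFieldType) (a b c : R) : 0 <= a -> 0 <= c ->
  (forall t, 0 <= a + 2 * t * b + t ^+ 2 * c) -> b ^+ 2 <= a * c.
Proof.
move=> a0 c0 H; have [c_eq0|c_neq0] := eqVneq c 0.
  have [->|b_neq0] := eqVneq b 0; first by rewrite expr0n mulr_ge0.
  have := H (- (a + 1) / (2 * b)).
  have -> : 2 * (- (a + 1) / (2 * b)) * b = - (a + 1) by field.
  rewrite c_eq0 mulr0; lra.
have : 0 <= c * (a + 2 * (- b / c) * b + (- b / c) ^+ 2 * c).
  exact: mulr_ge0 (H _).
have -> : c * (a + 2 * (- b / c) * b + (- b / c) ^+ 2 * c) = a * c - b ^+ 2.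
  by field.
by rewrite subr_ge0.
Qed.

Section InnerProduct.
Variables (R : realType) (n : nat).
Local Notation X := 'cV[R]_n.

Lemma dotpE (x y : X) : dotp x y = \sum_i x i 0 * y i 0.
Proof. by rewrite /dotp !mxE; apply: eq_bigr => i _; rewrite mxE. Qed.

Lemma dotpC (x y : X) : dotp x y = dotp y x.
Proof. by rewrite !dotpE; apply: eq_bigr => i _; rewrite mulrC. Qed.

Lemma dotpDr (x y z : X) : dotp z (x + y) = dotp z x + dotp z y.
Proof. by rewrite /dotp mulmxDr mxE. Qed.

Lemma dotpZr (c : R) (x z : X) : dotp z (c *: x) = c * dotp z x.
Proof. by rewrite /dotp -scalemxAr mxE. Qed.

Lemma dotpDl (x y z : X) : dotp (x + y) z = dotp x z + dotp y z.
Proof. by rewrite dotpC dotpDr !(dotpC z). Qed.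

Lemma dotpZl (c : R) (x z : X) : dotp (c *: x) z = c * dotp x z.
Proof. by rewrite dotpC dotpZr dotpC. Qed.

Lemma enormZ (c : R) (x : X) : enorm (c *: x) = `|c| * enorm x.
Proof.
by rewrite /enorm dotpZl dotpZr mulrA -expr2 sqrtrM ?sqr_ge0 // sqrtr_sqr.
Qed.

Lemma dotpNr (x z : X) : dotp z (- x) = - dotp z x.
Proof. by rewrite -scaleN1r dotpZr mulN1r. Qed.

Lemma dotpBr (x y z : X) : dotp z (x - y) = dotp z x - dotp z y.
Proof. by rewrite dotpDr dotpNr. Qed.

Lemma dotp0r (y : X) : dotp y 0 = 0.
Proof. by rewrite /dotp mulmx0 mxE. Qed.

Lemma dotp_trmx (A : 'M[R]_n) (x y : X) : dotp x (A *m y) = dotp (A^T *m x) y.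
Proof. by rewrite /dotp trmx_mul trmxK mulmxA. Qed.

Lemma dotpxx_ge0 (x : X) : 0 <= dotp x x.
Proof. by rewrite dotpE; apply: sumr_ge0 => i _; rewrite -expr2 sqr_ge0. Qed.

Lemma dotpxx_gt0 (x : X) : x != 0 -> 0 < dotp x x.
Proof.
move=> x0; rewrite lt_def dotpxx_ge0 andbT; apply: contraNN x0.
rewrite dotpE => /eqP/psumr_eq0P sq0.
apply/eqP/matrixP => i j; rewrite (ord1 j) mxE.
by apply/eqP; rewrite -sqrf_eq0 expr2 sq0 // => k _; rewrite -expr2 sqr_ge0.
Qed.

Lemma quad_formDZ (B : 'M[R]_n) (x y : X) (t : R) : B^T = B ->
  dotp (x + t *: y) (B *m (x + t *: y)) =
  dotp x (B *m x) + 2 * t * dotp y (B *m x) + t ^+ 2 * dotp y (B *m y).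
Proof.
move=> sB; have sy : dotp x (B *m y) = dotp y (B *m x) by rewrite dotp_trmx sB dotpC.
rewrite mulmxDr -scalemxAr dotpDl !dotpDr !dotpZl !dotpZr sy; ring.
Qed.

Lemma quad_formD (B : 'M[R]_n) (x y : X) : B^T = B ->
  dotp (x + y) (B *m (x + y)) =
  dotp x (B *m x) + 2 * dotp y (B *m x) + dotp y (B *m y).
Proof.
by move=> sB; rewrite -[y in LHS]scale1r quad_formDZ // expr1n mul1r mulr1.
Qed.

End InnerProduct.

Section Seminorm.
Variables (R : realType) (n : nat) (A : 'M[R]_n).
Hypothesis sA : A^T = A.
Hypothesis psdA : forall x, 0 <= dotp x (A *m x).
Local Notation X := 'cV[R]_n.
Local Notation N := (normM A).

Lemma normM_ge0 (x : X) : 0 <= N x.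
Proof. exact: sqrtr_ge0. Qed.

Lemma normM_sqr (x : X) : N x ^+ 2 = dotp x (A *m x).
Proof. by rewrite /normM sqr_sqrtr. Qed.

Lemma dotp_mulmxC (x y : X) : dotp x (A *m y) = dotp y (A *m x).
Proof. by rewrite dotp_trmx sA dotpC. Qed.

Lemma normM_cauchy_schwarz (x y : X) : dotp x (A *m y) <= N x * N y.
Proof.
have sq : dotp x (A *m y) ^+ 2 <= dotp x (A *m x) * dotp y (A *m y).
  rewrite dotp_mulmxC; apply: quadratic_ge0_discriminant => // t.
  by rewrite -quad_formDZ.
apply: le_trans (ler_norm _) _.
by rewrite -sqrtr_sqr /normM -sqrtrM // ler_sqrt // mulr_ge0.
Qed.

Lemma normMD (x y : X) : N (x + y) <= N x + N y.
Proof.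
rewrite -ler_sqr ?nnegrE ?addr_ge0 ?normM_ge0 //.
rewrite normM_sqr quad_formD //.
rewrite -!normM_sqr sqrrD mulr2n.
have := normM_cauchy_schwarz y x; rewrite mulrC; lra.
Qed.

Lemma normMZ (c : R) (x : X) : N (c *: x) = `|c| * N x.
Proof.
by rewrite /normM -scalemxAr dotpZl dotpZr mulrA -expr2 sqrtrM ?sqr_ge0 // sqrtr_sqr.
Qed.

Lemma normMB (x y : X) : N (x - y) = N (y - x).
Proof. by rewrite -opprB -scaleN1r normMZ normrN1 mul1r. Qed.

Lemma normM_pythagoras (z J d : X) : 0 <= dotp (J - d) (A *m (z - J)) ->
  N (z - J) ^+ 2 + N (J - d) ^+ 2 <= N (z - d) ^+ 2.
Proof.
move=> h; rewrite !normM_sqr.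
have -> : z - d = (z - J) + (J - d) by rewrite addrA subrK.
by rewrite (quad_formD (z - J)) // addrAC lerDl mulr_ge0.
Qed.

Lemma normM_relaxation_le (a b : X) (g : R) : 0 <= dotp b (A *m (a - b)) ->
  0 <= g <= 2 -> N (g *: b + (1 - g) *: a) <= N a.
Proof.
move=> h /andP[g0 g2].
have -> : g *: b + (1 - g) *: a = a + (- g) *: (a - b).
  by apply/matrixP => i j; rewrite !mxE; ring.
rewrite -ler_sqr ?nnegrE ?normM_ge0 // !normM_sqr quad_formDZ //.
have -> : dotp (a - b) (A *m a) = dotp (a - b) (A *m (a - b)) + dotp b (A *m (a - b)).
  by rewrite dotp_mulmxC -dotpDl subrK.
have := psdA (a - b); move: h.
move: (dotp a (A *m a)) (dotp (a - b) (A *m (a - b))) (dotp b (A *m (a - b))).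
move=> qa qv p p0 qv0.
have h1 : 0 <= g * (2 - g) * qv by rewrite !mulr_ge0 // subr_ge0.
have h2 : 0 <= g * p by rewrite mulr_ge0.
rewrite sqrrN; nra.
Qed.

Lemma normM_eq0_mulmx (x : X) : N x = 0 -> A *m x = 0.
Proof.
move=> Nx0; apply/eqP; apply: contraT => /dotpxx_gt0.
have := normM_cauchy_schwarz (A *m x) x; rewrite Nx0 mulr0.
by move=> /le_lt_trans h /h; rewrite ltxx.
Qed.

Lemma distM_le_normM (D : set X) (x d : X) : D d -> distM A x D <= N (d - x).
Proof.
move=> Dd; apply: ge_inf; last by exists d.
by exists 0 => _ [d' _ <-]; exact: normM_ge0.
Qed.

Lemma lb_le_distM (D : set X) (x : X) (c : R) : D !=set0 ->
  (forall d, D d -> c <= N (d - x)) -> c <= distM A x D.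
Proof.
move=> [d Dd] lb; apply: lb_le_inf; first by exists (N (d - x)), d.
by move=> _ [d' Dd' <-]; exact: lb.
Qed.

Lemma distM_ge0 (D : set X) (x : X) : D !=set0 -> 0 <= distM A x D.
Proof. by move=> D0; apply: lb_le_distM => // d _; exact: normM_ge0. Qed.

Lemma distM_le_add (D : set X) (x y : X) : D !=set0 ->
  distM A x D <= N (y - x) + distM A y D.
Proof.
move=> D0; rewrite addrC -lerBlDr; apply: lb_le_distM => // d Dd.
rewrite lerBlDr; apply: le_trans (distM_le_normM x Dd) _.
have -> : d - x = (d - y) + (y - x) by rewrite addrA subrK.
exact: normMD.
Qed.

Lemma distM_pythagoras (D : set X) (z J : X) (e : R) : D !=set0 ->
  (forall d, D d -> e ^+ 2 + N (J - d) ^+ 2 <= N (z - d) ^+ 2) ->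
  e ^+ 2 + distM A J D ^+ 2 <= distM A z D ^+ 2.
Proof.
move=> D0 pyth; have DJ0 := distM_ge0 J D0.
have e2DJ0 : 0 <= e ^+ 2 + distM A J D ^+ 2 by rewrite addr_ge0 ?sqr_ge0.
rewrite -(sqr_sqrtr e2DJ0) ler_sqr ?nnegrE ?sqrtr_ge0 ?distM_ge0 //.
apply: lb_le_distM => // d Dd.
rewrite -ler_sqr ?nnegrE ?sqrtr_ge0 ?normM_ge0 // sqr_sqrtr // normMB.
apply: le_trans (pyth d Dd); rewrite lerD2l ler_sqr ?nnegrE ?normM_ge0 //.
by rewrite normMB distM_le_normM.
Qed.

End Seminorm.

Lemma enormD (R : realType) n (x y : 'cV[R]_n) : enorm (x + y) <= enorm x + enorm y.
Proof.
have psd1 (v : 'cV[R]_n) : 0 <= dotp v (1%:M *m v) by rewrite mul1mx dotpxx_ge0.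
by have := normMD (tr_scalar_mx _ _) psd1 x y; rewrite /normM !mul1mx.
Qed.

Lemma quad_form_continuous (R : realType) n (A : 'M[R]_n) :
  continuous (fun v : 'rV[R]_n => dotp v^T (A *m v^T)).
Proof.
have -> : (fun v : 'rV[R]_n => dotp v^T (A *m v^T)) =
          (fun v => \sum_i v 0 i * \sum_j A i j * v 0 j).
  apply: funext => v; rewrite dotpE; apply: eq_bigr => i _.
  by rewrite !mxE; congr (_ * _); apply: eq_bigr => j _; rewrite !mxE.
apply: continuous_big => [|i _]; first exact: add_continuous.
move=> v; apply: continuousM; first exact: coord_continuous.
apply: continuous_big => [|j _ w]; first exact: add_continuous.
by apply: continuousM; [exact: cst_continuous | exact: coord_continuous].
Qed.

Section Spectral.
Variables (R : realType) (n : nat) (A : 'M[R]_n).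
Local Notation X := 'cV[R]_n.

Lemma eigenvalue_dim_gt0 (a : R) : eigenvalue A a -> (0 < n)%N.
Proof.
case/eigenvalueP => v _; apply: contraNT; rewrite -leqNgt leqn0 => /eqP n0.
by apply/eqP/matrixP => i j; have := ltn_ord j; rewrite {2}n0.
Qed.

(* The sphere is taken in row vectors, where closed bounded sets are known to be compact. *)
Lemma quad_form_min_on_sphere : (0 < n)%N -> exists2 c : X, dotp c c = 1 &
  forall x : X, dotp x x = 1 -> dotp c (A *m c) <= dotp x (A *m x).
Proof.
move=> n_gt0; pose S := [set v : 'rV[R]_n | dotp v^T v^T = 1].
have dotp_row (v : 'rV[R]_n) : dotp v^T v^T = \sum_i v 0 i ^+ 2.
  by rewrite dotpE; apply: eq_bigr => i _; rewrite !mxE expr2.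
have S_closed : closed S.
  have -> : S = (fun v : 'rV[R]_n => dotp v^T (1%:M *m v^T)) @^-1` [set 1].
    by apply/seteqP; split => v; rewrite /= mul1mx.
  by apply: preimage_closed; [move=> v _; exact: quad_form_continuous | exact: closed_eq].
have S_bounded : bounded_set S.
  exists 1; split; first by rewrite realE ler01.
  move=> r r1 v /= Sv; apply: le_trans (ltW r1).
  rewrite [X in X <= _]/Num.norm /= mx_normrE; apply: bigmax_le => // -[i j] _ /=.
  have : v i j ^+ 2 <= 1.
    rewrite -Sv dotp_row (ord1 i) (bigD1 j) //= lerDl.
    by apply: sumr_ge0 => k _; exact: sqr_ge0.
  by rewrite ler_norml => ?; apply/andP; split; nra.
have S_nonempty : S !=set0.
  exists (delta_mx 0 (Ordinal n_gt0)); rewrite /S /= dotp_row.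
  rewrite (bigD1 (Ordinal n_gt0)) //= mxE !eqxx expr1n big1 ?addr0 // => i /negbTE ni.
  by rewrite mxE ni andbF expr0n.
have [c Sc cmin] := compact_EVT_min S_nonempty
  (bounded_closed_compact S_bounded S_closed)
  (continuous_subspaceT (@quad_form_continuous _ _ A)).
exists c^T; first by move: Sc; rewrite inE.
by move=> x x1; rewrite -[x]trmxK; apply: cmin; rewrite inE /S /= trmxK.
Qed.

Hypothesis sA : A^T = A.

Lemma rayleigh_eigenvalue : (0 < n)%N ->
  exists2 m, eigenvalue A m & forall x : X, m * dotp x x <= dotp x (A *m x).
Proof.
move=> /quad_form_min_on_sphere [c c1 cmin]; set m := dotp c (A *m c).
have low (x : X) : m * dotp x x <= dotp x (A *m x).
  have [->|x0] := eqVneq x 0; first by rewrite mulmx0 !dotp0r mulr0.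
  have xx_gt0 := dotpxx_gt0 x0; set s := Num.sqrt (dotp x x).
  have s_gt0 : 0 < s by rewrite sqrtr_gt0.
  have s2 : s ^+ 2 = dotp x x by rewrite sqr_sqrtr ?ltW.
  have := cmin (s^-1 *: x).
  rewrite -scalemxAr !dotpZl !dotpZr !mulrA -expr2 exprVn s2 mulVf ?gt_eqF // => /(_ erefl).
  by rewrite -(ler_pM2l xx_gt0) mulrA mulfV ?gt_eqF // mul1r mulrC.
(* [A - m] is positive semidefinite with a form vanishing at [c], so [c] lies in its kernel. *)
exists m => //; pose B := A - m%:M.
have sB : B^T = B by rewrite /B linearB /= sA tr_scalar_mx.
have qB (x : X) : dotp x (B *m x) = dotp x (A *m x) - m * dotp x x.
  by rewrite /B mulmxBl mul_scalar_mx dotpBr dotpZr.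
have psdB (x : X) : 0 <= dotp x (B *m x) by rewrite qB subr_ge0.
have /(normM_eq0_mulmx sB psdB) Bc : normM B c = 0.
  by rewrite /normM qB c1 mulr1 subrr sqrtr0.
apply/eigenvalueP; exists c^T.
  by move/eqP: Bc; rewrite /B mulmxBl mul_scalar_mx subr_eq0 => /eqP/(congr1 trmx);
    rewrite trmx_mul sA linearZ /= => ->.
apply/eqP => /(congr1 trmx); rewrite trmxK trmx0 => c0.
by move: c1; rewrite c0 dotp0r => /eqP; rewrite eq_sym oner_eq0.
Qed.

End Spectral.

Section EigenvalueBounds.
Variables (R : realType) (n : nat) (A : 'M[R]_n).
Hypotheses (sA : A^T = A) (n_gt0 : (0 < n)%N).
Local Notation X := 'cV[R]_n.

Lemma normM_le_enorm : (forall a, eigenvalue A a -> a <= 1) ->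
  forall x : X, normM A x <= enorm x.
Proof.
move=> le1 x; have sN : (- A)^T = - A by rewrite linearN /= sA.
have [m /eigenvalueP [v vA v0] low] := rayleigh_eigenvalue sN n_gt0.
have /le1 m_ge : eigenvalue A (- m).
  by apply/eigenvalueP; exists v; rewrite // scaleNr -vA mulmxN opprK.
rewrite /normM /enorm ler_sqrt ?dotpxx_ge0 //.
move: (low x) (dotpxx_ge0 x); rewrite mulNmx dotpNr.
move: (dotp x x) (dotp x (A *m x)) => xx xAx; nra.
Qed.

Lemma enorm_le_normM (l : R) : 0 < l -> l <= 1 ->
  (forall a, eigenvalue A a -> l <= a) -> forall x : X, enorm x <= l^-1 * normM A x.
Proof.
move=> l_gt0 l_le1 lmin x.
have [m /lmin l_le_m low] := rayleigh_eigenvalue sA n_gt0.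
have l_low : l * dotp x x <= dotp x (A *m x).
  by apply: le_trans (low x); rewrite ler_wpM2r ?dotpxx_ge0.
have xAx_ge0 : 0 <= dotp x (A *m x).
  exact: le_trans (mulr_ge0 (ltW l_gt0) (dotpxx_ge0 x)) l_low.
have il_ge0 : 0 <= l^-1 by rewrite invr_ge0 ltW.
rewrite -ler_sqr ?nnegrE ?mulr_ge0 ?sqrtr_ge0 //.
rewrite exprMn /enorm /normM !sqr_sqrtr ?dotpxx_ge0 //.
have xx_le : dotp x x <= l^-1 * dotp x (A *m x).
  by rewrite -(ler_pM2l l_gt0) mulrA mulfV ?gt_eqF // mul1r.
by apply: le_trans xx_le _; rewrite expr2 -mulrA ler_peMl ?invf_ge1 ?mulr_ge0.
Qed.

End EigenvalueBounds.

Section PositiveDefinite.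
Variables (R : realType) (n : nat) (M : 'M[R]_n).
Hypotheses (sM : M^T = M) (pdM : forall z : 'cV[R]_n, z != 0 -> 0 < dotp z (M *m z)).
Local Notation X := 'cV[R]_n.

Lemma posdef_psd (x : X) : 0 <= dotp x (M *m x).
Proof. by have [->|/pdM/ltW] := eqVneq x 0; rewrite ?mulmx0 ?dotp0r. Qed.

Lemma posdef_eigenvalue_gt0 (a : R) : eigenvalue M a -> 0 < a.
Proof.
case/eigenvalueP => v vM v0.
have vT0 : v^T != 0 by rewrite -trmx0 (inj_eq trmx_inj).
have := pdM vT0; rewrite -{1}sM -trmx_mul vM linearZ /= dotpZr.
by rewrite pmulr_lgt0 // dotpxx_gt0.
Qed.

Lemma posdef_unitmx : M \in unitmx.
Proof.
rewrite unitmxE unitfE; apply/negP => /det0P [v v0 vM].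
have vT0 : v^T != 0 by rewrite -trmx0 (inj_eq trmx_inj).
by have := pdM vT0; rewrite -{1}sM -trmx_mul vM trmx0 dotp0r ltxx.
Qed.

Lemma enorm_mulmx_le_normM : (forall y : X, normM M y <= enorm y) ->
  forall x : X, enorm (M *m x) <= normM M x.
Proof.
move=> le_enorm x.
have cs : enorm (M *m x) ^+ 2 <= normM M x * enorm (M *m x).
  rewrite /enorm sqr_sqrtr ?dotpxx_ge0 // -{1}sM -dotp_trmx.
  apply: le_trans (normM_cauchy_schwarz sM posdef_psd _ _) _.
  by rewrite ler_wpM2l ?normM_ge0.
have [->|Mx_gt0] := eqVneq (enorm (M *m x)) 0; first exact: normM_ge0.
rewrite expr2 ler_pM2r // in cs.
by rewrite lt_def Mx_gt0 sqrtr_ge0.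
Qed.

End PositiveDefinite.

Lemma distM_le_dist (R : realType) n (A : 'M[R]_n) (D : set 'cV[R]_n) (x : 'cV[R]_n) :
  D !=set0 -> (forall y, normM A y <= enorm y) -> distM A x D <= dist x D.
Proof.
move=> [d Dd] le_enorm; apply: lb_le_inf; first by exists (enorm (d - x)), d.
by move=> _ [d' Dd' <-]; apply: le_trans (distM_le_normM _ _ Dd') (le_enorm _).
Qed.

Lemma le_sqrt_ratio (R : rcfType) (s k e a D : R) : 0 < s -> 0 <= a -> 0 <= D ->
  e ^+ 2 + a ^+ 2 <= D ^+ 2 -> a * s <= k * e ->
  a <= Num.sqrt (k ^+ 2 / (s ^+ 2 + k ^+ 2)) * D.
Proof.
move=> s_gt0 a_ge0 D_ge0 pyth as_le.
have den_gt0 : 0 < s ^+ 2 + k ^+ 2 by rewrite ltr_wpDr ?sqr_ge0 ?exprn_gt0.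
have as_sqr : (a * s) ^+ 2 <= (k * e) ^+ 2.
  have as_ge0 : 0 <= a * s := mulr_ge0 a_ge0 (ltW s_gt0).
  by rewrite ler_sqr ?nnegrE // (le_trans as_ge0).
have k_pyth : k ^+ 2 * (e ^+ 2 + a ^+ 2) <= k ^+ 2 * D ^+ 2 by rewrite ler_wpM2l ?sqr_ge0.
rewrite -ler_sqr ?nnegrE ?mulr_ge0 ?sqrtr_ge0 // exprMn sqr_sqrtr; last first.
  by rewrite divr_ge0 ?sqr_ge0 // ltW.
rewrite mulrAC ler_pdivlMr //; rewrite !exprMn in as_sqr; nra.
Qed.

Lemma sqrt_ratio_lt1 (R : rcfType) (s k : R) : 0 < s ->
  Num.sqrt (k ^+ 2 / (s ^+ 2 + k ^+ 2)) < 1.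
Proof.
move=> s_gt0; have den_gt0 : 0 < s ^+ 2 + k ^+ 2 by rewrite ltr_wpDr ?sqr_ge0 ?exprn_gt0.
by rewrite -sqrtr1 ltr_sqrt // ltr_pdivrMr // mul1r ltrDr exprn_gt0.
Qed.

Section Resolvent.
Variables (R : realType) (n : nat) (M : 'M[R]_n) (T : 'cV[R]_n -> set 'cV[R]_n).
Hypotheses (sM : M^T = M) (pdM : forall z : 'cV[R]_n, z != 0 -> 0 < dotp z (M *m z)).
Hypothesis monT : monotone T.
Local Notation X := 'cV[R]_n.
Local Notation N := (normM M).
Local Notation Omega := (zeros T).

Lemma resolvent_mulmx (s : R) (z J : X) : resolvent T M s z J ->
  exists2 u, T J u & M *m (z - J) = s *: u.
Proof.
move=> [u [TJu ->]]; exists u => //.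
by rewrite addrAC subrr add0r -scalemxAr mulmxA mulmxV ?posdef_unitmx // mul1mx.
Qed.

Lemma resolvent_zeros_dotp_ge0 (s : R) (z J d : X) : 0 <= s ->
  resolvent T M s z J -> Omega d -> 0 <= dotp (J - d) (M *m (z - J)).
Proof.
move=> s_ge0 /resolvent_mulmx [u TJu ->] Td0; rewrite dotpZr mulr_ge0 //.
by have := monT TJu Td0; rewrite subr0.
Qed.

Lemma resolvent_normM_le (s : R) (z J d : X) : 0 <= s ->
  resolvent T M s z J -> Omega d -> N (J - d) <= N (z - d).
Proof.
move=> s_ge0 resJ Td0; rewrite -ler_sqr ?nnegrE ?normM_ge0 //.
apply: le_trans _ (normM_pythagoras sM (posdef_psd pdM)
  (resolvent_zeros_dotp_ge0 s_ge0 resJ Td0)).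
by rewrite lerDr sqr_ge0.
Qed.

Lemma resolvent_enorm_le (l s : R) (z J d : X) :
  (forall y : X, enorm y <= l^-1 * N y) -> 0 <= l -> 0 <= s ->
  resolvent T M s z J -> Omega d -> enorm J <= enorm d + l^-1 * N (z - d).
Proof.
move=> le_normM l_ge0 s_ge0 resJ Td0; rewrite -[J](subrK d) addrC.
apply: le_trans (enormD _ _) _; rewrite lerD2l; apply: le_trans (le_normM _) _.
by rewrite ler_wpM2l ?invr_ge0 // (resolvent_normM_le s_ge0 resJ Td0).
Qed.

Lemma resolvent_distM_pythagoras (s : R) (z J : X) : 0 <= s -> Omega !=set0 ->
  resolvent T M s z J -> N (z - J) ^+ 2 + distM M J Omega ^+ 2 <= distM M z Omega ^+ 2.
Proof.
move=> s_ge0 Om0 resJ; apply: distM_pythagoras => // d Td0.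
apply: normM_pythagoras => //; first exact: posdef_psd.
exact: resolvent_zeros_dotp_ge0 s_ge0 resJ Td0.
Qed.

Lemma resolvent_gap_le_distM (s : R) (z J : X) : 0 <= s -> Omega !=set0 ->
  resolvent T M s z J -> N (z - J) <= distM M z Omega.
Proof.
move=> s_ge0 Om0 resJ; rewrite -ler_sqr ?nnegrE ?normM_ge0 ?distM_ge0 //.
apply: le_trans _ (resolvent_distM_pythagoras s_ge0 Om0 resJ).
by rewrite lerDl sqr_ge0.
Qed.

Lemma resolvent_distM_contraction (s k : R) (z J : X) :
  (forall y : X, N y <= enorm y) -> 0 < s -> 0 <= k -> Omega !=set0 ->
  resolvent T M s z J -> (forall u, T J u -> dist J Omega <= k * enorm u) ->
  (1 - Num.sqrt (k ^+ 2 / (s ^+ 2 + k ^+ 2))) * distM M z Omega <= N (z - J).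
Proof.
move=> le_enorm s_gt0 k_ge0 Om0 resJ subreg.
have [u TJu Mu] := resolvent_mulmx resJ.
have DJ_le : distM M J Omega * s <= k * N (z - J).
  apply: le_trans (ler_wpM2r (ltW s_gt0)
    (le_trans (distM_le_dist J Om0 le_enorm) (subreg u TJu))) _.
  rewrite -mulrA ler_wpM2l // mulrC -(ger0_norm (ltW s_gt0)) -enormZ -Mu.
  exact: enorm_mulmx_le_normM.
have := le_sqrt_ratio s_gt0 (distM_ge0 M J Om0) (distM_ge0 M z Om0)
  (resolvent_distM_pythagoras (ltW s_gt0) Om0 resJ) DJ_le.
have := distM_le_add sM (posdef_psd pdM) z J Om0; rewrite normMB; lra.
Qed.

Lemma IGPPAstep_fejer (z z' d : X) (s e dl g : R) : 0 <= s -> 0 <= g <= 2 ->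
  IGPPAstep T M z s e dl g z' -> Omega d -> N (z' - d) <= N (z - d) + g * e.
Proof.
move=> s_ge0 /andP[g_ge0 g_le2] [w [J [resJ [wJ ->]]]] Td0.
have -> : g *: w + (1 - g) *: z - d =
    (g *: (J - d) + (1 - g) *: (z - d)) + g *: (w - J).
  by apply/matrixP => i j; rewrite !mxE; ring.
apply: le_trans (normMD sM (posdef_psd pdM) _ _) _; apply: lerD.
  apply: normM_relaxation_le; rewrite ?g_ge0 //; first exact: posdef_psd.
  have -> : z - d - (J - d) = z - J by rewrite opprB addrA subrK.
  exact: resolvent_zeros_dotp_ge0 s_ge0 resJ Td0.
rewrite normMZ ger0_norm //; apply: ler_wpM2l => //.
by move: wJ; rewrite le_min => /andP[].
Qed.

Lemma IGPPAstep_resolvent_gap (z z' : X) (s e dl g : R) : 0 <= g ->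
  IGPPAstep T M z s e dl g z' -> exists2 J, resolvent T M s z J &
  (1 - dl) * N (z' - z) <= g * N (z - J) <= (1 + dl) * N (z' - z).
Proof.
move=> g_ge0 [w [J [resJ [wJ ->]]]]; exists J => //.
have -> : g *: w + (1 - g) *: z - z = g *: (w - z).
  by apply/matrixP => i j; rewrite !mxE; ring.
rewrite normMZ ger0_norm //.
have {}wJ : N (w - J) <= dl * N (w - z) by move: wJ; rewrite le_min => /andP[].
have tri_wz : N (w - z) <= N (w - J) + N (z - J).
  rewrite (normMB M z); have -> : w - z = (w - J) + (J - z) by rewrite addrA subrK.
  exact: normMD sM (posdef_psd pdM) _ _.
have tri_zJ : N (z - J) <= N (w - z) + N (w - J).
  rewrite (normMB M w z); have -> : z - J = (z - w) + (w - J) by rewrite addrA subrK.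
  exact: normMD sM (posdef_psd pdM) _ _.
apply/andP; split; rewrite mulrCA; apply: ler_wpM2l => //; lra.
Qed.

Lemma IGPPA_fejer_series (z : nat -> X) (sigma eta : nat -> R) (dl g : R) (d : X) :
  (forall k, 0 <= sigma k) -> 0 <= g <= 2 ->
  (forall k, IGPPAstep T M (z k) (sigma k) (eta k) dl g (z k.+1)) -> Omega d ->
  forall k, N (z k - d) <= N (z 0%N - d) + g * series eta k.
Proof.
move=> sigma_ge0 g02 step Td0; elim=> [|k IH].
  by rewrite seriesEnat /= big_geq // mulr0 addr0.
apply: le_trans (IGPPAstep_fejer (sigma_ge0 k) g02 (step k) Td0) _.
by rewrite seriesSr mulrDr addrA lerD2r.
Qed.

End Resolvent.

Unset Implicit Arguments.

Theorem proposition1 (R : realType) (n : nat)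
  (T : 'cV[R]_n -> set 'cV[R]_n) (M : 'M[R]_n) (lmin : R)
  (z : nat -> 'cV[R]_n) (sigma eta : nat -> R) (gamma delta : R)
  (zbar0 : 'cV[R]_n) (r kappa : R) :
  maximal_monotone T ->
  zeros T !=set0 ->
  symmetric_posdef M ->
  (* lambda_max(M) = 1 *)
  eigenvalue M 1 -> (forall a, eigenvalue M a -> a <= 1) ->
  (* lmin = lambda_min(M) *)
  eigenvalue M lmin -> (forall a, eigenvalue M a -> lmin <= a) ->
  0 < gamma < 2 ->
  0 <= delta < 2^-1 ->
  (forall k, 0 <= sigma k) -> (forall k, 0 <= eta k) ->
  cvgn (series eta) ->
  0 < inf (range sigma) ->
  (forall k, IGPPAstep T M (z k) (sigma k) (eta k) delta gamma (z k.+1)) ->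
  bounded_metric_subregular T ->
  zeros T zbar0 ->
  (forall d, zeros T d -> normM M (zbar0 - z 0%N) <= normM M (d - z 0%N)) ->
  enorm zbar0 + lmin^-1 * (distM M (z 0%N) (zeros T)
                             + gamma * limn (series eta)) <= r ->
  0 < kappa ->
  (forall x, enorm x <= r -> forall v, T x v ->
     dist x (zeros T) <= kappa * enorm v) ->
  forall k : nat,
    (1 - delta) / gamma * normM M (z k.+1 - z k) <= distM M (z k) (zeros T)
    /\ distM M (z k) (zeros T) <=
       (1 + delta) / (gamma * (1 - Num.sqrt (kappa ^+ 2 / (sigma k ^+ 2 + kappa ^+ 2))))
         * normM M (z k.+1 - z k).
Proof.
move=> [monT _] Om0 [sM pdM] e1 le1 elmin lmin_le /andP[g_gt0 g_lt2] _ sigma_ge0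
  eta_ge0 eta_cvg inf_sigma_gt0 step _ Tzb0 zb0_nearest r_ge kappa_gt0 subreg k.
have n_gt0 := eigenvalue_dim_gt0 e1.
have lmin_gt0 := posdef_eigenvalue_gt0 sM pdM elmin.
have sigma_gt0 : 0 < sigma k.
  by apply: lt_le_trans inf_sigma_gt0 (ge_inf _ _); [exists 0 => _ [j _ <-] | exists k].
have g02 : 0 <= gamma <= 2 by rewrite (ltW g_gt0) (ltW g_lt2).
have [J resJ /andP[gap_lb gap_ub]] := IGPPAstep_resolvent_gap sM pdM (ltW g_gt0) (step k).
have J_le_r : enorm J <= r.
  have le_normM := enorm_le_normM sM n_gt0 lmin_gt0 (lmin_le _ e1) lmin_le.
  apply: le_trans (resolvent_enorm_le sM pdM monT le_normM (ltW lmin_gt0)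
    (sigma_ge0 k) resJ Tzb0) (le_trans _ r_ge).
  rewrite lerD2l ler_wpM2l ?invr_ge0 ?(ltW lmin_gt0) //.
  apply: le_trans (IGPPA_fejer_series sM pdM monT sigma_ge0 g02 step Tzb0 k) _.
  rewrite lerD ?ler_wpM2l ?(ltW g_gt0) //; first by rewrite normMB lb_le_distM.
  apply: (nondecreasing_cvgn_le _ eta_cvg).
  by apply/nondecreasing_seqP => j; rewrite seriesSr lerDl.
split.
  rewrite mulrAC ler_pdivrMr //; apply: le_trans gap_lb _.
  rewrite mulrC; apply: ler_wpM2r; first exact: ltW.
  exact: (resolvent_gap_le_distM sM pdM monT (sigma_ge0 k) Om0 resJ).
have rho_lt1 := sqrt_ratio_lt1 kappa sigma_gt0.
rewrite mulrAC ler_pdivlMr ?mulr_gt0 ?subr_gt0 // mulrC -mulrA.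
apply: le_trans _ gap_ub; apply: ler_wpM2l; first exact: ltW.
apply: (resolvent_distM_contraction sM pdM monT _ sigma_gt0 (ltW kappa_gt0) Om0 resJ).
  exact: (normM_le_enorm sM n_gt0 le1).
by move=> u; apply: subreg J J_le_r u.
Qed.
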